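(* Let $p,q$ be positive integers with $2\le p/q<4$, let $f$ be a $(p,q)$-colouring of a graph $G$, and let $v$ be a vertex lying on a directed cycle of $D_f$ (i.e. in a nontrivial strongly connected component of $D_f$). Then $v$ is fixed: for every $(p,q)$-colouring $h$ obtainable from $f$ by a sequence of single-vertex recolourings (each intermediate map being a $(p,q)$-colouring), $h(v)=f(v)$.
   Context: A $(p,q)$-colouring of $G$ is a map $f:V(G)\to\{0,\dots,p-1\}$ with $q\le|f(u)-f(v)|\le p-q$ for every edge $uv$. $D_f$ is the digraph on $V(G)$ with an arc $\overrightarrow{xy}$ whenever $xy\in E(G)$ and $f(y)-f(x)\equiv q\pmod p$ (for $p=2q$ each edge yields a directed 2-cycle). *)

From mathcomp Require Import all_boot.
From Stdlib Require Import Relation_Operators.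
Set Implicit Arguments. Unset Strict Implicit. Unset Printing Implicit Defensive.

Definition simple_graph (T : finType) (e : rel T) : Prop :=
  symmetric e /\ irreflexive e.

Definition absdiff (a b : nat) : nat := maxn a b - minn a b.

Definition pq_colouring (T : finType) (e : rel T) (p q : nat) (f : T -> nat) : Prop :=
  (forall v, f v < p) /\
  (forall u v, e u v -> q <= absdiff (f u) (f v) <= p - q).

Definition Df_arc (T : finType) (e : rel T) (p q : nat) (f : T -> nat) : rel T :=
  fun x y => e x y && (f y == f x + q %[mod p]).

Definition on_directed_cycle (T : finType) (e : rel T) (p q : nat) (f : T -> nat)
  (v : T) : Prop :=
  exists y, Df_arc e p q f v y /\ connect (Df_arc e p q f) y v.

Definition recolour_step (T : finType) (e : rel T) (p q : nat) (g h : T -> nat) : Prop :=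
  pq_colouring e p q g /\ pq_colouring e p q h /\
  exists w, forall u, u != w -> g u = h u.

Definition reconfigurable (T : finType) (e : rel T) (p q : nat) (g h : T -> nat) : Prop :=
  clos_refl_trans (T -> nat) (@recolour_step T e p q) g h.

From mathcomp Require Import all_boot zify.
From Stdlib Require Import Relation_Operators.

Set Implicit Arguments.
Unset Strict Implicit.
Unset Printing Implicit Defensive.

(* The vertices of D_f lying on directed cycles are pinned: each such vertex w
   has an in-neighbour x and an out-neighbour y that again lie on directed
   cycles, and f(x), f(w), f(y) are f(x), f(x)+q, f(x)+2q modulo p.  A colour
   at circular distance at least q from both f(x) and f(x)+2q must be f(x)+q,
   because the circle has length p < 4q.  So as long as x and y keep their
   colours, w cannot be recoloured, and no single recolouring step can be the
   first to move a vertex on a directed cycle. *)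

Lemma eqn_mod_small (p a b : nat) : b < p -> a < p.*2 ->
  b = a %[mod p] -> b = a \/ b + p = a.
Proof.
move=> lt_bp lt_a2p; rewrite (modn_small lt_bp) => ->.
have [lt_ap|le_pa] := ltnP a p; first by left; rewrite modn_small.
by right; rewrite -[in a %% p](subnK le_pa) modnDr modn_small; lia.
Qed.

Lemma colour_between_arcs_forced (p q a b c d : nat) : 2 * q <= p < 4 * q ->
  a < p -> b < p -> c < p -> d < p ->
  b = a + q %[mod p] -> c = b + q %[mod p] ->
  q <= absdiff a d <= p - q -> q <= absdiff d c <= p - q -> d = b.
Proof.
move=> ratio lt_ap lt_bp lt_cp lt_dp.
have lt_aq : a + q < p.*2 by lia.
have lt_bq : b + q < p.*2 by lia.
move=> /(eqn_mod_small lt_bp lt_aq) Eb /(eqn_mod_small lt_cp lt_bq) Ec.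
rewrite /absdiff; lia.
Qed.

Section DirectedCycles.

Variables (T : finType) (r : rel T).

Definition on_cycle (u : T) : Prop := exists y, r u y /\ connect r y u.

Lemma on_cycle_succ u : on_cycle u -> exists2 y, r u y & on_cycle y.
Proof.
case=> y [r_uy /connectP [[|z s] /= path_s last_s]].
  by exists y => //; exists y; rewrite -{1}last_s.
case/andP: path_s => r_yz path_s; exists y => //; exists z; split=> //.
apply: connect_trans (connect1 r_uy); rewrite last_s.
by apply/connectP; exists s.
Qed.

Lemma on_cycle_pred u : on_cycle u -> exists2 x, r x u & on_cycle x.
Proof.
case=> y [r_uy /connectP [s]]; case/lastP: s => [/= _ u_eq_y|s x].
  by subst u; exists y => //; exists y; split.
rewrite rcons_path last_rcons => /andP [path_s r_lastx] u_eq_x; subst x.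
exists (last y s) => //; exists u; split=> //.
by apply: connect_trans (connect1 r_uy) _; apply/connectP; exists s.
Qed.

End DirectedCycles.

Section CycleVerticesFixed.

Variables (T : finType) (e : rel T) (p q : nat) (f : T -> nat).
Hypothesis e_irr : irreflexive e.
Hypothesis ratio : 2 * q <= p < 4 * q.
Hypothesis f_col : pq_colouring e p q f.

Let D := Df_arc e p q f.

Definition fixes_cycles (g : T -> nat) : Prop :=
  forall u, on_cycle D u -> g u = f u.

Lemma recolour_step_fixes_cycles g h :
  recolour_step e p q g h -> fixes_cycles g -> fixes_cycles h.
Proof.
move=> [_ [[lt_hp adj_h] [w g_eq_h]]] g_fix u u_cyc.
have [u_eq_w|u_neq_w] := eqVneq u w; last by rewrite -g_eq_h // g_fix.
subst u.
have [x /andP [e_xw /eqP Ex] x_cyc] := on_cycle_pred u_cyc.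
have [y /andP [e_wy /eqP Ey] y_cyc] := on_cycle_succ u_cyc.
have unmoved z : on_cycle D z -> e z w || e w z -> h z = f z.
  move=> z_cyc e_zw; rewrite -g_eq_h ?g_fix //.
  by apply: contraTneq e_zw => ->; rewrite e_irr.
have [lt_fp _] := f_col.
apply: (colour_between_arcs_forced ratio (lt_fp x) (lt_fp w) (lt_fp y) (lt_hp w) Ex Ey).
- by rewrite -(unmoved x x_cyc) ?e_xw //; apply: adj_h.
- by rewrite -(unmoved y y_cyc) ?e_wy ?orbT //; apply: adj_h.
Qed.

Lemma reconfigurable_fixes_cycles g h :
  reconfigurable e p q g h -> fixes_cycles g -> fixes_cycles h.
Proof.
elim=> {g h} [g h /recolour_step_fixes_cycles //|//|g k h _ IHgk _ IHkh].
by move/IHgk/IHkh.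
Qed.

End CycleVerticesFixed.

Theorem lemma2p8 (T : finType) (e : rel T) (p q : nat)
  (Hgraph : simple_graph e) (Hq : 0 < q) (Hp : 0 < p)
  (Hratio : 2 * q <= p < 4 * q)
  (f : T -> nat) (Hf : pq_colouring e p q f)
  (v : T) (Hv : on_directed_cycle e p q f v) :
  forall h : T -> nat, pq_colouring e p q h -> reconfigurable e p q f h -> h v = f v.
Proof.
move=> h _ f_to_h; have [_ e_irr] := Hgraph.
by apply: (reconfigurable_fixes_cycles e_irr Hratio Hf f_to_h) Hv.
Qed.
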